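(* Let $G$ have a RAAG-like action on the CAT(0) cube complex $X$, let $g\in G$ be hyperbolic, and let $\alpha=(\Phi_0,\dots,\Phi_r)$ be a segment all of whose halfspaces lie in $A^+_g$. Let $h\in G$ be such that all halfspaces of $h\overline\alpha$ lie in $A^+_g$. Then either $h\overline{\alpha}>\alpha$ or $\alpha>h\overline{\alpha}$.
   Context: $\mathcal{H}(X)$ is the set of halfspaces, $\overline\Phi$ the complement of $\Phi$. Two halfspaces are nested if one of $\Phi\subseteq\Psi$, $\overline{\Phi}\subseteq\Psi$, $\Phi\subseteq\overline{\Psi}$, $\overline{\Phi}\subseteq\overline{\Psi}$ holds, transverse otherwise; tightly nested means nested with no halfspace strictly in between for the relevant strict inclusion; $\Phi\supsetneq\Psi$ tightly means $\Phi\supsetneq\Psi$ and no $\Phi'$ has $\Phi\supsetneq\Phi'\supsetneq\Psi$. The action is RAAG-like if: (i) no $\Phi$, $h\in G$ with $h\overline\Phi=\Phi$; (ii) no $\Phi$, $h$ with $\Phi$, $h\Phi$ transverse; (iii) no tightly nested $\Phi,\Phi'$ and $h$ with $\Phi$, $h\Phi'$ transverse; (iv) no $\Phi$, $h$ with $\Phi\subsetneq h\overline\Phi$ tightly. $d^c$ is the combinatorial distance on vertices, $\delta(g)=\min_x d^c(x,gx)$, $g$ hyperbolic if $\delta(g)>0$. For vertices $x,y$, $[x,y]=\{\Phi: x\notin\Phi,\ y\in\Phi\}$. For $g$ hyperbolic and $o$ a vertex with $d^c(o,go)=\delta(g)$, $A^+_g=\bigcup_{n\in\mathbb Z}[g^no,g^{n+1}o]$,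 the set of halfspaces crossed (in the direction of translation) by a combinatorial axis of $g$; it does not depend on the choice of $o$. A segment is a finite sequence $\gamma=(\Phi_0,\dots,\Phi_r)$ of halfspaces with $\Phi_i\supsetneq\Phi_{i+1}$ tightly; its reverse is $\overline\gamma=(\overline\Phi_r,\dots,\overline\Phi_0)$, and $h\gamma=(h\Phi_0,\dots,h\Phi_r)$. For segments $\gamma=(\Phi_0,\dots,\Phi_r)$, $\gamma'=(\Psi_0,\dots,\Psi_s)$ write $\gamma>\gamma'$ if $\Phi_r\supsetneq\Psi_0$. *)

(* A CAT(0) cube complex X is encoded by its 1-skeleton, a
   median graph (Chepoi / Roller: 1-skeleta of CAT(0) cube complexes are
   exactly the median graphs).  Vertices of X = vertices of the graph,
   combinatorial distance d^c = graph distance, halfspaces of X = vertex sets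
   H with H and its complement nonempty and geodesically convex. *)
From Stdlib Require Import ZArith List Arith.
Import ListNotations.

Section Graph.
Variable V : Type.
Variable adj : V -> V -> Prop.

Inductive walk : V -> V -> nat -> Prop :=
| walk_nil x : walk x x 0
| walk_cons x y z n : adj x y -> walk y z n -> walk x z (S n).

Definition is_dist (x y : V) (n : nat) : Prop :=
  walk x y n /\ forall m, walk x y m -> n <= m.

Definition between (x y z : V) : Prop :=
  exists a b c, is_dist x z a /\ is_dist z y b /\ is_dist x y c /\ a + b = c.

Definition is_median_graph : Prop :=
  (forall x y, adj x y -> adj y x) /\
  (forall x, ~ adj x x) /\
  (forall x y, exists n, walk x y n) /\
  (forall x y z, exists m, between x y m /\ between y z m /\ between x z m /\
      forall m', between x y m' -> between y z m' -> between x z m' -> m' = m).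

Definition convex (A : V -> Prop) : Prop :=
  forall x y z, A x -> A y -> between x y z -> A z.

Definition co (A : V -> Prop) : V -> Prop := fun v => ~ A v.

Definition halfspace (A : V -> Prop) : Prop :=
  (exists x, A x) /\ (exists x, ~ A x) /\ convex A /\ convex (co A).

Definition subset (A B : V -> Prop) : Prop := forall v, A v -> B v.
Definition seteq (A B : V -> Prop) : Prop := subset A B /\ subset B A.
Definition ssubset (A B : V -> Prop) : Prop := subset A B /\ ~ subset B A.

Definition tight_sup (A B : V -> Prop) : Prop :=
  ssubset B A /\
  forall C, halfspace C -> ~ (ssubset B C /\ ssubset C A).

Definition nested (A B : V -> Prop) : Prop :=
  subset A B \/ subset (co A) B \/ subset A (co B) \/ subset (co A) (co B).
Definition transverse (A B : V -> Prop) : Prop := ~ nested A B.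

Definition tightly_nested (A B : V -> Prop) : Prop :=
  tight_sup B A \/ tight_sup B (co A) \/ tight_sup (co B) A \/
  tight_sup (co B) (co A).

Definition crosses (x y : V) (A : V -> Prop) : Prop := ~ A x /\ A y.

Fixpoint tight_chain (l : list (V -> Prop)) : Prop :=
  match l with
  | a :: ((b :: _) as t) => tight_sup a b /\ tight_chain t
  | _ => True
  end.

Definition is_segment (l : list (V -> Prop)) : Prop :=
  l <> [] /\ Forall halfspace l /\ tight_chain l.

Definition rev_seg (l : list (V -> Prop)) : list (V -> Prop) := rev (map co l).

Definition seg_gt (l l' : list (V -> Prop)) : Prop :=
  ssubset (hd (fun _ => False) l') (last l (fun _ => False)).

End Graph.

Arguments walk {V}. Arguments is_dist {V}. Arguments between {V}.
Arguments is_median_graph {V}. Arguments convex {V}. Arguments co {V}.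
Arguments halfspace {V}. Arguments subset {V}. Arguments seteq {V}.
Arguments ssubset {V}. Arguments tight_sup {V}. Arguments nested {V}.
Arguments transverse {V}. Arguments tightly_nested {V}. Arguments crosses {V}.
Arguments tight_chain {V}. Arguments is_segment {V}. Arguments rev_seg {V}.
Arguments seg_gt {V}.

Record GroupAction (V : Type) (adj : V -> V -> Prop) := {
  grp : Type;
  mul : grp -> grp -> grp;
  one : grp;
  inv : grp -> grp;
  mulA : forall a b c, mul a (mul b c) = mul (mul a b) c;
  mul1g : forall a, mul one a = a;
  mulg1 : forall a, mul a one = a;
  mulVg : forall a, mul (inv a) a = one;
  mulgV : forall a, mul a (inv a) = one;
  act : grp -> V -> V;
  act1 : forall x, act one x = x;
  actM : forall a b x, act (mul a b) x = act a (act b x);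
  act_adj : forall a x y, adj x y -> adj (act a x) (act a y)
}.

Arguments grp {V adj}.
Arguments mul {V adj}.
Arguments one {V adj}.
Arguments inv {V adj}.
Arguments act {V adj}.

Section Action.
Variables (V : Type) (adj : V -> V -> Prop) (A : GroupAction V adj).

Fixpoint gpow (g : grp A) (n : nat) : grp A :=
  match n with O => one A | S k => mul A g (gpow g k) end.

Definition zpow (g : grp A) (z : Z) : grp A :=
  match z with
  | Z0 => one A
  | Zpos p => gpow g (Pos.to_nat p)
  | Zneg p => inv A (gpow g (Pos.to_nat p))
  end.

Definition hs_act (h : grp A) (P : V -> Prop) : V -> Prop :=
  fun v => P (act A (inv A h) v).

Definition seg_act (h : grp A) (l : list (V -> Prop)) : list (V -> Prop) :=
  map (hs_act h) l.

Definition RAAG_like : Prop :=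
  (forall P h, halfspace adj P -> ~ seteq (hs_act h (co P)) P) /\
  (forall P h, halfspace adj P -> ~ transverse P (hs_act h P)) /\
  (forall P P' h, halfspace adj P -> halfspace adj P' ->
      tightly_nested adj P P' -> ~ transverse P (hs_act h P')) /\
  (forall P h, halfspace adj P -> ~ tight_sup adj (hs_act h (co P)) P).

Definition min_disp (g : grp A) (n : nat) : Prop :=
  (exists x, is_dist adj x (act A g x) n) /\
  forall x m, is_dist adj x (act A g x) m -> n <= m.

Definition hyperbolic (g : grp A) : Prop :=
  exists n, min_disp g n /\ 0 < n.

Definition minimizer (g : grp A) (o : V) : Prop :=
  exists n, min_disp g n /\ is_dist adj o (act A g o) n.

Definition Aplus (g : grp A) (o : V) (P : V -> Prop) : Prop :=
  halfspace adj P /\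
  exists n : Z, crosses (act A (zpow g n) o) (act A (zpow g (n + 1)) o) P.

End Action.

Arguments gpow {V adj}. Arguments zpow {V adj}. Arguments hs_act {V adj}.
Arguments seg_act {V adj}. Arguments RAAG_like {V adj}. Arguments min_disp {V adj}.
Arguments hyperbolic {V adj}. Arguments minimizer {V adj}. Arguments Aplus {V adj}.

(* Let o realise the minimal displacement d of g and let
      pt n = g^n o.  Using the median property, condition (i) and minimality
      of d, a halfspace cannot be entered and left by the axis within two
      steps; with (ii) this forces every halfspace P crossed by the axis to
      contain its translate gP, so P contains exactly the pt K beyond its
      crossing.  Hence nested halfspaces of A^+_g are comparable.
   2. Propagation.  For P with P and h P^c in A^+_g, (i) and (ii) make P and
      h P^c strictly comparable; (iii) and (iv) show that "h P^c is strictly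
      inside P" passes from P to any halfspace tightly inside P.
   3. The theorem: compare the first halfspace a of alpha with h a^c; in one
      case h(reverse alpha) > alpha directly, in the other the comparison
      propagates to the last halfspace of alpha, giving alpha > h(reverse alpha). *)

From Pilot Require Import Defs.
From Stdlib Require Import ZArith List Lia Classical.
Import ListNotations.

Section GroupFacts.
Variables (V : Type) (adj : V -> V -> Prop) (G : GroupAction V adj).

Lemma act_inv_l a x : act G (inv G a) (act G a x) = x.
Proof. rewrite <- actM, mulVg, act1. reflexivity. Qed.

Lemma act_inv_r a x : act G a (act G (inv G a) x) = x.
Proof. rewrite <- actM, mulgV, act1. reflexivity. Qed.

Lemma inv_inv a : inv G (inv G a) = a.
Proof.
  rewrite <- (mulg1 _ _ G (inv G (inv G a))), <- (mulVg _ _ G a), mulA, mulVg, mul1g.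
  reflexivity.
Qed.

Lemma inv_mul a b : inv G (mul G a b) = mul G (inv G b) (inv G a).
Proof.
  assert (E : mul G (mul G a b) (mul G (inv G b) (inv G a)) = one G).
  { rewrite <- !mulA, (mulA _ _ G b), mulgV, mul1g, mulgV. reflexivity. }
  rewrite <- (mulg1 _ _ G (inv G (mul G a b))), <- E, mulA, mulVg, mul1g.
  reflexivity.
Qed.

Lemma gpow_succ_r g k : gpow G g (S k) = mul G (gpow G g k) g.
Proof.
  induction k as [|k IH]; simpl.
  - rewrite mulg1, mul1g. reflexivity.
  - simpl in IH. rewrite IH at 1. rewrite mulA. reflexivity.
Qed.

Lemma zpow_succ_l g n : zpow G g (n + 1) = mul G g (zpow G g n).
Proof.
  destruct n as [|p|p]; [simpl..|].
  - rewrite mulg1. reflexivity.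
  - replace (Pos.to_nat (p + 1)) with (S (Pos.to_nat p)) by lia. reflexivity.
  - destruct (Pos.succ_pred_or p) as [->| <-].
    + simpl. rewrite mulg1, mulgV. reflexivity.
    + replace (Z.neg (Pos.succ (Pos.pred p)) + 1)%Z with (Z.neg (Pos.pred p)) by lia.
      simpl. replace (Pos.to_nat (Pos.succ (Pos.pred p))) with (S (Pos.to_nat (Pos.pred p))) by lia.
      rewrite gpow_succ_r, inv_mul, mulA, mulgV, mul1g. reflexivity.
Qed.

Lemma zpow_succ_r g n : zpow G g (n + 1) = mul G (zpow G g n) g.
Proof.
  destruct n as [|p|p]; [simpl..|].
  - rewrite mulg1, mul1g. reflexivity.
  - replace (Pos.to_nat (p + 1)) with (S (Pos.to_nat p)) by lia. apply gpow_succ_r.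
  - destruct (Pos.succ_pred_or p) as [->| <-].
    + simpl. rewrite mulg1, mulVg. reflexivity.
    + replace (Z.neg (Pos.succ (Pos.pred p)) + 1)%Z with (Z.neg (Pos.pred p)) by lia.
      simpl. replace (Pos.to_nat (Pos.succ (Pos.pred p))) with (S (Pos.to_nat (Pos.pred p))) by lia.
      simpl. rewrite inv_mul, <- mulA, mulVg, mulg1. reflexivity.
Qed.

End GroupFacts.

Section SetFacts.
Variables (V : Type) (adj : V -> V -> Prop).

Lemma nested_co (A B : V -> Prop) : nested A B -> nested A (co B).
Proof.
  unfold nested, subset, co. intros [S|[S|[S|S]]].
  - right; right; left. intros v Av Bv. exact (Bv (S v Av)).
  - right; right; right. intros v Av Bv. exact (Bv (S v Av)).
  - left. exact S.
  - right; left. exact S.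
Qed.

Lemma ssubset_seteq_l (A A' B : V -> Prop) : seteq A A' -> ssubset A B -> ssubset A' B.
Proof. unfold ssubset, seteq, subset. intros [E1 E2] [S1 S2]. split; firstorder. Qed.

Lemma ssubset_seteq_r (A B B' : V -> Prop) : seteq B B' -> ssubset A B -> ssubset A B'.
Proof. unfold ssubset, seteq, subset. intros [E1 E2] [S1 S2]. split; firstorder. Qed.

Lemma tight_sup_seteq_r (A B B' : V -> Prop) : seteq B B' -> tight_sup adj A B -> tight_sup adj A B'.
Proof.
  intros E [S T]. split; [eapply ssubset_seteq_l; eauto|].
  intros C HC [S1 S2]. apply (T C HC). split; [|exact S2].
  destruct E as [E1 E2]. eapply ssubset_seteq_l; [split; eauto|exact S1].
Qed.

End SetFacts.

Section Walks.
Variables (V : Type) (adj : V -> V -> Prop).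

Lemma walk_app x y z n m : walk adj x y n -> walk adj y z m -> walk adj x z (n + m).
Proof. induction 1; simpl; eauto using walk. Qed.

Lemma walk_zero x y : walk adj x y 0 -> x = y.
Proof. intros W; inversion W; reflexivity. Qed.

Lemma walk_shortest x y m :
  walk adj x y m -> exists n, is_dist adj x y n /\ n <= m.
Proof.
  revert m. induction m as [m IH] using (well_founded_induction lt_wf). intros Wm.
  destruct (classic (exists k, walk adj x y k /\ k < m)) as [(k&Wk&Hk)|Hnone].
  - destruct (IH k Hk Wk) as (n&Dn&Hn). exists n. split; [exact Dn|lia].
  - exists m. repeat split; auto. intros k Wk.
    destruct (le_lt_dec m k); auto. exfalso; eauto.
Qed.

Lemma between_of_geodesic x y z a b :
  walk adj x y a -> walk adj y z b -> is_dist adj x z (a + b) -> Defs.between adj x z y.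
Proof.
  intros Wa Wb [Wab Mab]. exists a, b, (a + b). repeat split; auto.
  - intros m Wm. pose proof (Mab _ (walk_app _ _ _ _ _ Wm Wb)). lia.
  - intros m Wm. pose proof (Mab _ (walk_app _ _ _ _ _ Wa Wm)). lia.
Qed.

Lemma walk_exit_edge (Q : V -> Prop) a b n :
  walk adj a b n -> Q a -> ~ Q b ->
  exists u v n1 n2, walk adj a u n1 /\ adj u v /\ walk adj v b n2 /\
    n1 + 1 + n2 = n /\ Q u /\ ~ Q v.
Proof.
  induction 1 as [x|x x' z n Ax Wx IH]; intros Qa Qb; [contradiction|].
  destruct (classic (Q x')) as [Qx'|Qx'].
  - destruct (IH Qx' Qb) as (u&v&n1&n2&W1&A&W2&E&Qu&Qv).
    exists u, v, (S n1), n2. repeat split; eauto using walk; lia.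
  - exists x, x', 0, n. repeat split; eauto using walk; lia.
Qed.

Lemma between_adj u v m : adj u v -> Defs.between adj u v m -> m = u \/ m = v.
Proof.
  intros A (a&b&c&[Wa _]&[Wb _]&[_ Mc]&E).
  assert (c <= 1) by (apply Mc; eauto using walk).
  destruct a; [left; symmetry; now apply walk_zero|].
  destruct b; [right; now apply walk_zero|lia].
Qed.

Lemma halfspace_co A : halfspace adj A -> halfspace adj (co A).
Proof.
  intros ((x&Hx)&(y&Hy)&C1&C2). repeat split; auto.
  - exists y; auto.
  - exists x; unfold co; auto.
  - intros a b c Ha Hb B Hc. apply Hc. apply (C1 a b); auto; apply NNPP; auto.
Qed.

(* In a median graph, if the edge uv enters both P and Q then P is inside Q:
   for w in P outside Q, the median of u, v, w would be u or v, yet it lies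
   in P (between v and w) and outside Q (between u and w). *)
Lemma edge_halfspace_sub (HX : is_median_graph adj) u v (P Q : V -> Prop) :
  adj u v -> convex adj P -> convex adj (co Q) -> ~ P u -> P v -> ~ Q u -> Q v ->
  subset P Q.
Proof.
  intros A CP CQ Pu Pv Qu Qv w Pw. apply NNPP; intro Qw.
  destruct HX as (_&_&_&Hmed). destruct (Hmed u v w) as (m&B1&B2&B3&_).
  assert (Pm : P m) by (apply (CP v w); auto).
  assert (Qm : co Q m) by (apply (CQ u w); auto).
  destruct (between_adj u v m A B1); subst; auto.
Qed.

Lemma edge_halfspace_eq (HX : is_median_graph adj) u v (P Q : V -> Prop) :
  adj u v -> halfspace adj P -> halfspace adj Q -> ~ P u -> P v -> ~ Q u -> Q v ->
  seteq P Q.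
Proof.
  intros A (_&_&CP&CcP) (_&_&CQ&CcQ) Pu Pv Qu Qv.
  split; eapply edge_halfspace_sub; eauto.
Qed.

End Walks.

Section Translates.
Variables (V : Type) (adj : V -> V -> Prop) (G : GroupAction V adj).

Lemma walk_act a x y n : walk adj x y n -> walk adj (act G a x) (act G a y) n.
Proof. induction 1; [constructor|econstructor; [apply act_adj|]; eauto]. Qed.

Lemma is_dist_act a x y n : is_dist adj x y n -> is_dist adj (act G a x) (act G a y) n.
Proof.
  intros [W M]. split; [now apply walk_act|].
  intros m Wm. apply M. apply (walk_act (inv G a)) in Wm.
  now rewrite !act_inv_l in Wm.
Qed.

Lemma between_act a x y z :
  Defs.between adj x y z -> Defs.between adj (act G a x) (act G a y) (act G a z).
Proof.
  intros (p&q&r&H1&H2&H3&H4). exists p, q, r. auto using is_dist_act.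
Qed.

Lemma hs_act_act a P x : hs_act G a P (act G a x) <-> P x.
Proof. unfold hs_act. rewrite act_inv_l. reflexivity. Qed.

Lemma convex_hs_act a A : convex adj A -> convex adj (hs_act G a A).
Proof.
  intros C x y z Hx Hy B. unfold hs_act in *.
  apply (C (act G (inv G a) x) (act G (inv G a) y)); auto. now apply between_act.
Qed.

Lemma halfspace_hs_act a A : halfspace adj A -> halfspace adj (hs_act G a A).
Proof.
  intros ((x&Hx)&(y&Hy)&C1&C2). unfold hs_act. repeat split.
  - exists (act G a x). now rewrite act_inv_l.
  - exists (act G a y). now rewrite act_inv_l.
  - now apply convex_hs_act.
  - change (convex adj (hs_act G a (co A))). now apply convex_hs_act.
Qed.

End Translates.

Section Axis.
Variables (V : Type) (adj : V -> V -> Prop) (G : GroupAction V adj).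
Hypothesis HX : is_median_graph adj.
Variables (g : grp G) (o : V) (d : nat).
Hypothesis disp_min : forall x m, is_dist adj x (act G g x) m -> d <= m.
Hypothesis o_min : is_dist adj o (act G g o) d.
Hypothesis no_inversion : forall P h, halfspace adj P -> ~ seteq (hs_act G h (co P)) P.
Hypothesis no_self_transverse :
  forall P h, halfspace adj P -> ~ transverse P (hs_act G h P).

Definition pt (n : Z) : V := act G (zpow G g n) o.

Lemma pt_succ n : act G g (pt n) = pt (n + 1).
Proof. unfold pt. rewrite <- actM, zpow_succ_l. reflexivity. Qed.

Lemma hs_act_pt P n : hs_act G g P (pt (n + 1)) <-> P (pt n).
Proof. rewrite <- pt_succ. apply hs_act_act. Qed.

Lemma pt_min n : is_dist adj (pt n) (act G g (pt n)) d.
Proof.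
  rewrite pt_succ. unfold pt. rewrite zpow_succ_r, actM. now apply is_dist_act.
Qed.

Lemma walk_disp_ge x m : walk adj x (act G g x) m -> d <= m.
Proof.
  intros W. destruct (walk_shortest _ _ _ _ _ W) as (n&Dn&Hn).
  pose proof (disp_min _ _ Dn). lia.
Qed.

(* Let y realise the minimal displacement.  A halfspace P disjoint from its
   translate g^-1 P cannot contain gy while missing both y and g^2 y: an edge
   uv of a geodesic from y to gy with gu in P and gv not in P either separates
   P and g^-1 P^c in the same direction (so they coincide, an inversion), or
   shows that gy lies on a geodesic between v and gv outside P. *)
Lemma no_bounce_at y (Hy : is_dist adj y (act G g y) d) P (HP : halfspace adj P)
  (disj : forall v, P v -> ~ P (act G g v)) :
  ~ P y -> P (act G g y) -> ~ P (act G g (act G g y)) -> False.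
Proof.
  intros Py Pgy Pggy. destruct Hy as [Wy _].
  destruct (walk_exit_edge _ _ (fun x => P (act G g x)) _ _ _ Wy Pgy Pggy)
    as (u&v&n1&n2&Wu&Auv&Wv&Hn&Pgu&Pgv).
  assert (Pu : ~ P u) by (intro Pu; exact (disj u Pu Pgu)).
  destruct (classic (P v)) as [Pv|Pv].
  - apply (no_inversion P (inv G g) HP).
    apply (edge_halfspace_eq _ _ HX u v); auto.
    + apply halfspace_hs_act, halfspace_co, HP.
    + unfold hs_act, co. rewrite inv_inv. tauto.
    + unfold hs_act, co. rewrite inv_inv. tauto.
  - assert (Wgy : walk adj (act G g y) (act G g v) (n1 + 1)).
    { apply walk_act, walk_app with u; eauto using walk. }
    assert (Dv : is_dist adj v (act G g v) (n2 + (n1 + 1))).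
    { split; [eapply walk_app; eauto|].
      intros m Wm. pose proof (walk_disp_ge _ _ Wm). lia. }
    destruct HP as (_&_&_&CcP).
    exact (CcP v (act G g v) (act G g y) Pv Pgv
             (between_of_geodesic _ _ _ _ _ _ _ Wv Wgy Dv) Pgy).
Qed.

(* By (ii) P and gP are nested; each nesting either excludes the
   bounce outright or makes P or P^c disjoint from its g^-1-translate, which
   [no_bounce_at] excludes. *)
Lemma no_bounce P (HP : halfspace adj P) m :
  ~ P (pt m) -> P (pt (m + 1)) -> ~ P (pt (m + 2)) -> False.
Proof.
  intros P0 P1 P2.
  assert (E2 : pt (m + 2) = act G g (act G g (pt m))) by (rewrite !pt_succ; f_equal; lia).
  destruct (NNPP _ (no_self_transverse P g HP)) as [S|[S|[S|S]]].
  - apply P0, hs_act_pt, S, P1.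
  - assert (Pm : P (pt (m - 1))).
    { apply hs_act_pt, S. now replace (m - 1 + 1)%Z with m by lia. }
    apply (no_bounce_at (pt (m - 1)) (pt_min _) (co P) (halfspace_co _ _ _ HP)).
    + intros v Pv Pgv. apply Pv, (hs_act_act _ _ G g), S, Pgv.
    + unfold co. tauto.
    + rewrite pt_succ. now replace (m - 1 + 1)%Z with m by lia.
    + rewrite !pt_succ. replace (m - 1 + 1 + 1)%Z with (m + 1)%Z by lia. unfold co. tauto.
  - apply (no_bounce_at (pt m) (pt_min _) P HP); [|exact P0|now rewrite pt_succ|now rewrite <- E2].
    intros v Pv Pgv. apply (S _ Pgv), hs_act_act, Pv.
  - apply P2. rewrite E2, pt_succ. apply NNPP. intro Hn.
    apply (S _ Hn), hs_act_act, P1.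
Qed.

(* A halfspace crossed by the axis from pt n to pt (n+1) contains its
   translate by g: the other three nestings of P and gP force a bounce. *)
Lemma crossed_shift_sub P (HP : halfspace adj P) n :
  ~ P (pt n) -> P (pt (n + 1)) -> subset (hs_act G g P) P.
Proof.
  intros P0 P1.
  destruct (NNPP _ (no_self_transverse P g HP)) as [S|[S|[S|S]]].
  - exfalso. apply P0, hs_act_pt, S, P1.
  - exfalso. apply (no_bounce (co P) (halfspace_co _ _ _ HP) (n - 1)); unfold co.
    + intro Hn. apply Hn, hs_act_pt, S.
      now replace (n - 1 + 1)%Z with n by lia.
    + now replace (n - 1 + 1)%Z with n by lia.
    + now replace (n - 1 + 2)%Z with (n + 1)%Z by lia.
  - exfalso. apply (no_bounce P HP n P0 P1). intro P2.
    replace (n + 2)%Z with (n + 1 + 1)%Z in P2 by lia.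
    apply (S _ P2), hs_act_pt, P1.
  - intros v Pgv. apply NNPP. intro Pv. exact (S v Pv Pgv).
Qed.

Lemma axis_up_closed P (step : forall k, P (pt k) -> P (pt (k + 1))) a b :
  (a <= b)%Z -> P (pt a) -> P (pt b).
Proof.
  intros Hab Pa. replace b with (a + Z.of_nat (Z.to_nat (b - a)))%Z by lia.
  induction (Z.to_nat (b - a)) as [|k IH]; [now rewrite Z.add_0_r|].
  rewrite Nat2Z.inj_succ, Z.add_succ_r, <- Z.add_1_r. now apply step.
Qed.

Lemma crossed_axis P (HP : halfspace adj P) n :
  ~ P (pt n) -> P (pt (n + 1)) ->
  (forall K, (n + 1 <= K)%Z -> P (pt K)) /\ (forall L, (L <= n)%Z -> ~ P (pt L)).
Proof.
  intros P0 P1.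
  assert (step : forall k, P (pt k) -> P (pt (k + 1))).
  { intros k Pk. apply (crossed_shift_sub P HP n P0 P1), hs_act_pt, Pk. }
  split.
  - intros K HK. exact (axis_up_closed P step _ _ HK P1).
  - intros L HL PL. exact (P0 (axis_up_closed P step _ _ HL PL)).
Qed.

Lemma crossed_nested_comparable P Q : Aplus G g o P -> Aplus G g o Q -> nested P Q ->
  subset P Q \/ subset Q P.
Proof.
  intros (HP&n&Pn&Pn1) (HQ&m&Qm&Qm1) N.
  destruct (crossed_axis P HP n Pn Pn1) as [PF PB].
  destruct (crossed_axis Q HQ m Qm Qm1) as [QF QB].
  set (K := (Z.max n m + 1)%Z). set (L := Z.min n m).
  assert (PK : P (pt K)) by (apply PF; lia).
  assert (QK : Q (pt K)) by (apply QF; lia).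
  assert (PL : ~ P (pt L)) by (apply PB; lia).
  assert (QL : ~ Q (pt L)) by (apply QB; lia).
  destruct N as [S|[S|[S|S]]].
  - now left.
  - exfalso. exact (QL (S _ PL)).
  - exfalso. exact (S _ PK QK).
  - right. intros v Qv. apply NNPP. intro Pv. exact (S v Pv Qv).
Qed.

End Axis.

(** The map X |-> h X^c.  It sends the halfspaces of a segment alpha to those
    of h(reverse alpha), reverses inclusions and preserves tightness. *)
Section Flip.
Variables (V : Type) (adj : V -> V -> Prop) (G : GroupAction V adj) (h : grp G).

Definition hco (X : V -> Prop) : V -> Prop := hs_act G h (co X).

Lemma hco_subset (A B : V -> Prop) : subset A B <-> subset (hco B) (hco A).
Proof.
  unfold hco, hs_act, co, subset. split.
  - intros S v Bv Av. exact (Bv (S _ Av)).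
  - intros S v Av. apply NNPP. intro Bv.
    apply (S (act G h v)); rewrite act_inv_l; assumption.
Qed.

Lemma hco_ssubset (A B : V -> Prop) : ssubset A B <-> ssubset (hco B) (hco A).
Proof. unfold ssubset. rewrite !(hco_subset A B), !(hco_subset B A). reflexivity. Qed.

Lemma hco_preimage (C : V -> Prop) : seteq C (hco (co (hs_act G (inv G h) C))).
Proof.
  unfold seteq, subset, hco, hs_act, co. rewrite inv_inv.
  split; intros v; rewrite act_inv_r; [tauto|apply NNPP].
Qed.

(* The flip preserves tightness, since it is a bijection on halfspaces. *)
Lemma hco_tight (A B : V -> Prop) : tight_sup adj A B -> tight_sup adj (hco B) (hco A).
Proof.
  intros [S T]. split; [exact (proj1 (hco_ssubset B A) S)|].
  intros C HC [S1 S2].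
  set (C' := co (hs_act G (inv G h) C)).
  assert (HC' : halfspace adj C') by (apply halfspace_co, halfspace_hs_act, HC).
  apply (T C' HC'). split; apply <- hco_ssubset.
  - eapply ssubset_seteq_l; [apply hco_preimage|exact S2].
  - eapply ssubset_seteq_r; [apply hco_preimage|exact S1].
Qed.

End Flip.

Arguments hco {V adj} G h X.

(** Let Ap be a family of halfspaces in which nested members are comparable
    under inclusion (later: the halfspaces crossed by the axis of g). *)
Section Propagation.
Variables (V : Type) (adj : V -> V -> Prop) (G : GroupAction V adj).
Hypothesis HG : RAAG_like G.
Variables (h : grp G) (Ap : (V -> Prop) -> Prop).
Hypothesis Ap_halfspace : forall P, Ap P -> halfspace adj P.
Hypothesis Ap_comparable :
  forall P Q, Ap P -> Ap Q -> nested P Q -> subset P Q \/ subset Q P.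

(* By (ii) P and hP are nested, by (i) P differs from h P^c. *)
Lemma hco_dichotomy (P : V -> Prop) : Ap P -> Ap (hco G h P) ->
  ssubset P (hco G h P) \/ ssubset (hco G h P) P.
Proof.
  intros AP AhP. destruct HG as (no_inv&no_self&_&_).
  assert (N : nested P (hco G h P)).
  { apply nested_co, NNPP, no_self, Ap_halfspace, AP. }
  destruct (Ap_comparable _ _ AP AhP N) as [S|S]; [left|right]; split; auto;
    intro S'; apply (no_inv P h (Ap_halfspace _ AP)); split; auto.
Qed.

(* If Pi contains Pj tightly and h Pi^c is strictly inside Pi, then h Pj^c is
   strictly inside Pj: otherwise (iii) or (iv) is violated, or some
   halfspace sits strictly between Pi and Pj or between their flips. *)
Lemma hco_step (Pi Pj : V -> Prop) : tight_sup adj Pi Pj ->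
  Ap Pi -> Ap Pj -> Ap (hco G h Pi) -> Ap (hco G h Pj) ->
  ssubset (hco G h Pi) Pi -> ssubset (hco G h Pj) Pj.
Proof.
  intros T Ai Aj Ahi Ahj Si.
  destruct (hco_dichotomy Pj Aj Ahj) as [Sj|Sj]; [exfalso|exact Sj].
  destruct HG as (_&_&no_tn_transverse&no_tight_flip).
  destruct (classic (subset (hco G h Pi) Pj)) as [Y|Y].
  - pose proof (hco_tight _ _ G h _ _ T) as T'.
    destruct (classic (subset Pj (hco G h Pi))) as [Y2|Y2].
    + apply (no_tight_flip Pj h (Ap_halfspace _ Aj)).
      exact (tight_sup_seteq_r _ _ _ _ _ (conj Y Y2) T').
    + apply (proj2 T' Pj (Ap_halfspace _ Aj)). split; [split; auto|exact Sj].
  - assert (N : nested Pj (hco G h Pi)).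
    { apply nested_co, NNPP, no_tn_transverse; auto. left. exact T. }
    destruct (Ap_comparable _ _ Aj Ahi N) as [S|S]; [|contradiction].
    apply (proj2 T (hco G h Pi) (Ap_halfspace _ Ahi)). split; [split; auto|exact Si].
Qed.

Lemma hco_chain (d : V -> Prop) l : tight_chain adj l ->
  (forall x, In x l -> Ap x /\ Ap (hco G h x)) ->
  ssubset (hco G h (hd d l)) (hd d l) ->
  ssubset (hco G h (last l d)) (last l d).
Proof.
  induction l as [|a [|b t] IH]; intros TC Hin Sa; auto.
  destruct TC as [T TC].
  destruct (Hin a) as [Aa Aha]; [now left|].
  destruct (Hin b) as [Ab Ahb]; [right; now left|].
  apply IH; auto.
  - intros x Hx. apply Hin. now right.
  - exact (hco_step a b T Aa Ab Aha Ahb Sa).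
Qed.

End Propagation.

Lemma seg_act_rev_seg V adj (G : GroupAction V adj) h (l : list (V -> Prop)) :
  seg_act G h (rev_seg l) = rev (map (hco G h) l).
Proof. unfold seg_act, rev_seg, hco. rewrite map_rev, map_map. reflexivity. Qed.

Lemma hd_rev {A} (l : list A) d : hd d (rev l) = last l d.
Proof.
  induction l as [|a l _] using rev_ind; [reflexivity|].
  rewrite rev_app_distr, last_last. reflexivity.
Qed.

Lemma last_rev_cons {A} (a : A) t d : last (rev (a :: t)) d = a.
Proof. apply last_last. Qed.

Lemma last_map_cons {A B} (f : A -> B) a t d d' :
  last (map f (a :: t)) d = f (last (a :: t) d').
Proof.
  revert a. induction t as [|b t IH]; intro a; [reflexivity|].
  exact (IH b).
Qed.

(** If the first halfspace a of alpha is strictly inside h a^c,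
    the last halfspace of h(reverse alpha) strictly contains a.  Otherwise
    h a^c is strictly inside a, this propagates along alpha, and the first
    halfspace h b^c of h(reverse alpha) lies strictly inside the last
    halfspace b of alpha. *)
Theorem lemma5p4 (V : Type) (adj : V -> V -> Prop)
  (HX : is_median_graph adj) (G : GroupAction V adj)
  (HG : RAAG_like G) (g : grp G) (o : V)
  (Hg : hyperbolic G g) (Ho : minimizer G g o)
  (alpha : list (V -> Prop)) (Halpha : is_segment adj alpha)
  (HA : Forall (Aplus G g o) alpha) (h : grp G)
  (HhA : Forall (Aplus G g o) (seg_act G h (rev_seg alpha))) :
  seg_gt (seg_act G h (rev_seg alpha)) alpha \/
  seg_gt alpha (seg_act G h (rev_seg alpha)).
Proof.
  destruct Ho as (d&(_&disp_min)&o_min).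
  pose proof HG as (no_inv&no_self&_&_).
  assert (comparable : forall P Q, Aplus G g o P -> Aplus G g o Q -> nested P Q ->
            subset P Q \/ subset Q P)
    by exact (crossed_nested_comparable V adj G HX g o d disp_min o_min no_inv no_self).
  assert (Aplus_halfspace : forall P, Aplus G g o P -> halfspace adj P) by (intros P [HP _]; exact HP).
  destruct Halpha as (Hne&_&chain).
  rewrite seg_act_rev_seg in *. unfold seg_gt.
  assert (Hin : forall x, In x alpha -> Aplus G g o x /\ Aplus G g o (hco G h x)).
  { intros x Hx. split; [exact (proj1 (Forall_forall _ _) HA x Hx)|].
    apply (proj1 (Forall_forall _ _) HhA), (proj1 (in_rev _ _)), in_map, Hx. }
  destruct alpha as [|a t]; [contradiction|].
  destruct (hco_dichotomy V adj G HG h _ Aplus_halfspace comparable a) as [S|S];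
    try (apply Hin; now left).
  - left. simpl map. rewrite last_rev_cons. exact S.
  - right. rewrite hd_rev, (last_map_cons _ _ _ _ (fun _ => False)).
    exact (hco_chain V adj G HG h _ Aplus_halfspace comparable _ _ chain Hin S).
Qed.
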